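(* Let $R$ be an $n^2\times n^2$ solution of the QYBE satisfying the Hecke condition $(PR-q)(PR+q^{-1})=0$, and let $\Omega_q(R)$ be the associated quantum exterior algebra. Then the Hopf algebra $U_q^\Omega(H_1,H_2,X^\pm)$ acts covariantly from the right on $\Omega_q(R)$, i.e. there is a right action $\triangleleft$ with $(xy)\triangleleft h=\sum(x\triangleleft h_{(1)})(y\triangleleft h_{(2)})$ for $\Delta_\Omega h=\sum h_{(1)}\otimes h_{(2)}$, given on generators by $x_i\triangleleft H_1=2x_i$, $x_i\triangleleft H_2=0$, $x_i\triangleleft X^+=q^{-1}\mathrm dx_i$, $x_i\triangleleft X^-=0$, and $\mathrm dx_i\triangleleft H_1=0$, $\mathrm dx_i\triangleleft H_2=2\,\mathrm dx_i$, $\mathrm dx_i\triangleleft X^+=0$, $\mathrm dx_i\triangleleft X^-=q\,x_i$.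
   Context: $P$ is the permutation matrix; $R$ has entries $R^a{}_i{}^b{}_j$, repeated indices summed. $\Omega_q(R)$ is the algebra generated by $x_1,\dots,x_n,\mathrm dx_1,\dots,\mathrm dx_n$ with relations $x_ix_j=q^{-1}x_bx_aR^a{}_i{}^b{}_j$, $\mathrm dx_i\,x_j=q\,x_b\,\mathrm dx_aR^a{}_i{}^b{}_j$, $\mathrm dx_i\,\mathrm dx_j=-q\,\mathrm dx_b\,\mathrm dx_aR^a{}_i{}^b{}_j$. Exponentials are formal. $U_q^\Omega(H_1,H_2,X^\pm)$ is the Hopf algebra generated by $H_1,H_2,X^\pm$ with relations $[H_1,H_2]=0$, $[H_1,X^\pm]=\pm2X^\pm$, $[H_2,X^\pm]=\mp2X^\pm$, $[X^+,X^-]=\frac{K_1K_2-K_1^{-1}K_2^{-1}}{q-q^{-1}}$ (where $K_1=q^{H_1/2}$, $K_2=e^{i\frac{\pi}{2}H_2}q^{H_2/2}$), $(X^\pm)^2=0$; counit zero on generators; coproduct $\Delta_\Omega H_i=H_i\otimes1+1\otimes H_i$, $\Delta_\Omega X^+=X^+\otimes q^{-H_2/2}+e^{-i\frac{\pi}{2}H_2}q^{-H_2/2}\otimes X^+$, $\Delta_\Omega X^-=X^-\otimes e^{i\frac{\pi}{2}H_2}q^{(H_1+2H_2)/2}+q^{-H_1/2}\otimes X^-$; antipode $S_\Omega(H_i)=-H_i$, $S_\Omega(X^+)=-qe^{i\frac{\pi}{2}H_2}q^{H_2}X^+$, $S_\Omega(X^-)=qe^{-i\frac{\pi}{2}H_2}q^{-H_2}X^-$.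 *)

From HB Require Import structures.
From mathcomp Require Import all_boot all_order all_algebra.
Set Implicit Arguments. Unset Strict Implicit. Unset Printing Implicit Defensive.
Import Order.TTheory GRing.Theory Num.Theory.
Local Open Scope ring_scope.

Section QuantumDefs.
Variable C : numClosedFieldType.

Definition mmul (T : finType) (M N : T -> T -> C) (u v : T) : C :=
  \sum_(w : T) M u w * N w v.
Definition idm (T : finType) (u v : T) : C := (u == v)%:R.

Variable n : nat.
(* R is given by its entries: R a i b j = R^a_i^b_j, i.e. the entry of the
   n^2 x n^2 matrix R in row (a,b) and column (i,j). *)
Variable R : 'I_n -> 'I_n -> 'I_n -> 'I_n -> C.

Local Notation T2 := ('I_n * 'I_n)%type.
Local Notation T3 := ('I_n * 'I_n * 'I_n)%type.

Definition Rmx (u v : T2) : C := R u.1 v.1 u.2 v.2.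
Definition Pmx (u v : T2) : C := ((u.1 == v.2) && (u.2 == v.1))%:R.
Definition PRmx : T2 -> T2 -> C := mmul Pmx Rmx.

Definition R12 (u v : T3) : C := R u.1.1 v.1.1 u.1.2 v.1.2 * (u.2 == v.2)%:R.
Definition R13 (u v : T3) : C := R u.1.1 v.1.1 u.2 v.2 * (u.1.2 == v.1.2)%:R.
Definition R23 (u v : T3) : C := (u.1.1 == v.1.1)%:R * R u.1.2 v.1.2 u.2 v.2.

Definition QYBE : Prop :=
  forall u v : T3, mmul (mmul R12 R13) R23 u v = mmul (mmul R23 R13) R12 u v.

Variable q : C.

Definition Hecke : Prop :=
  forall u v : T2,
    mmul (fun a b => PRmx a b - q * idm a b) (fun a b => PRmx a b + q^-1 * idm a b) u v = 0.

Definition omega_rel (B : algType C) (x dx : 'I_n -> B) : Prop :=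
  forall i j : 'I_n,
  [/\ x i * x j = q^-1 *: \sum_(a < n) \sum_(b < n) R a i b j *: (x b * x a),
      dx i * x j = q *: \sum_(a < n) \sum_(b < n) R a i b j *: (x b * dx a) &
      dx i * dx j = - q *: \sum_(a < n) \sum_(b < n) R a i b j *: (dx b * dx a)].

Definition alg_hom (A B : algType C) (f : A -> B) : Prop :=
  linear f /\ monoid_morphism f.

(* (A, x, dx) is the algebra generated by x_i, dx_i subject to omega_rel,
   i.e. it satisfies the universal property of the presented algebra. *)
Definition is_Omega (A : algType C) (x dx : 'I_n -> A) : Prop :=
  omega_rel x dx /\
  forall (B : algType C) (y dy : 'I_n -> B), omega_rel y dy ->
    (exists f : A -> B, alg_hom f /\ forall i, f (x i) = y i /\ f (dx i) = dy i) /\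
    (forall f g : A -> B, alg_hom f -> alg_hom g ->
       (forall i, f (x i) = g (x i) /\ f (dx i) = g (dx i)) -> f =1 g).

Section Action.
Variable A : algType C.
Variables H1 H2 : A -> A.  (* v |-> v <| H1, v |-> v <| H2 *)

Definition weight (v : A) (m1 m2 : int) : Prop :=
  H1 v = m1%:~R *: v /\ H2 v = m2%:~R *: v.

(* H1, H2 act diagonalizably (every element is a finite sum of weight vectors),
   which is what makes the formal exponentials of H1, H2 meaningful *)
Definition wdiag : Prop :=
  forall v : A, exists s : seq (A * (int * int)),
    v = \sum_(p <- s) p.1 /\ forall p, p \in s -> weight p.1 p.2.1 p.2.2.

(* T is the operator f(H1,H2) (functional calculus on weight vectors) *)
Definition funop (f : int -> int -> C) (T : A -> A) : Prop :=
  linear T /\ forall v m1 m2, weight v m1 m2 -> T v = f m1 m2 *: v.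

End Action.

(* s = q^(1/2); the functions giving the formal exponentials on weights (m1,m2) *)
Definition sq : C := sqrtC q.
Definition fa (m1 m2 : int) : C := sq ^ (- m2).
(* e^{-i pi H2/2} q^{-H2/2} *)
Definition fb (m1 m2 : int) : C := 'i ^ (- m2) * sq ^ (- m2).
(* e^{i pi H2/2} q^{(H1+2H2)/2} *)
Definition fc (m1 m2 : int) : C := 'i ^ m2 * sq ^ (m1 + 2 * m2).
Definition fd (m1 m2 : int) : C := sq ^ (- m1).
(* K1 K2 = q^{H1/2} e^{i pi H2/2} q^{H2/2} *)
Definition fK (m1 m2 : int) : C := sq ^ m1 * ('i ^ m2 * sq ^ m2).
(* K1^{-1} K2^{-1} *)
Definition fKi (m1 m2 : int) : C := sq ^ (- m1) * ('i ^ (- m2) * sq ^ (- m2)).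

(* H1, H2, Xp, Xm : A -> A are the maps v |-> v <| H1, etc.  The right action
   convention is v <| (g h) = (v <| g) <| h. *)
Definition covariant_right_action (A : algType C) (x dx : 'I_n -> A)
    (H1 H2 Xp Xm : A -> A) : Prop :=
  [/\ linear H1 /\ linear H2 /\ linear Xp /\ linear Xm,
      wdiag H1 H2 &
      exists Ta Tb Tc Td TK TKi : A -> A,
      [/\ funop H1 H2 fa Ta /\ funop H1 H2 fb Tb /\ funop H1 H2 fc Tc /\
          funop H1 H2 fd Td /\ funop H1 H2 fK TK /\ funop H1 H2 fKi TKi,
        (* relations of U_q^Omega, acting from the right *)
        forall v : A,
          H2 (H1 v) = H1 (H2 v) /\
          Xp (H1 v) - H1 (Xp v) = 2%:R *: Xp v /\
          Xm (H1 v) - H1 (Xm v) = - (2%:R *: Xm v) /\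
          Xp (H2 v) - H2 (Xp v) = - (2%:R *: Xp v) /\
          Xm (H2 v) - H2 (Xm v) = 2%:R *: Xm v /\
          Xm (Xp v) - Xp (Xm v) = (q - q^-1)^-1 *: (TK v - TKi v) /\
          Xp (Xp v) = 0 /\ Xm (Xm v) = 0,
        forall u w : A,
          [/\ H1 (u * w) = H1 u * w + u * H1 w,
              H2 (u * w) = H2 u * w + u * H2 w,
              Xp (u * w) = Xp u * Ta w + Tb u * Xp w &
              Xm (u * w) = Xm u * Tc w + Td u * Xm w] &
        forall i : 'I_n,
          H1 (x i) = 2%:R *: x i /\ H2 (x i) = 0 /\
          Xp (x i) = q^-1 *: dx i /\ Xm (x i) = 0 /\
          H1 (dx i) = 0 /\ H2 (dx i) = 2%:R *: dx i /\
          Xp (dx i) = 0 /\ Xm (dx i) = q *: x i]].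

End QuantumDefs.

From HB Require Import structures.
From mathcomp Require Import all_boot all_order all_algebra.
From mathcomp Require Import ring.
From Stdlib Require Import ClassicalEpsilon.
Set Implicit Arguments. Unset Strict Implicit. Unset Printing Implicit Defensive.
Import Order.TTheory GRing.Theory Num.Theory.
Local Open Scope ring_scope.

(* Every operator is obtained from the universal property of Omega_q(R).  The
   exponentials of H1, H2 occurring in the coproduct are automorphisms rescaling
   x_i and dx_i, which respects the homogeneous quadratic relations.  A twisted
   derivation D (D(uw) = D u * Tr w + Tl u * D w) with prescribed values on the
   generators is the upper right corner of the algebra morphism
   u |-> [[Tl u, D u], [0, Tr u]] into upper triangular matrices, which exists as
   soon as the prescribed values are compatible with the relations; for X+ and X-
   this is where the Hecke condition (PR)^2 = (q - q^-1) PR + 1 enters.  The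
   relations of U_q then only have to be checked on products of generators: these
   are joint weight vectors, the relations are inherited by products through the
   coproduct formulas, and weight vectors of distinct weights are independent, so
   the functions of (H1, H2) act as prescribed. *)

(** * Presented algebras *)

Section AlgHom.
Variables (C : numClosedFieldType) (A B : algType C).

Lemma lrmorphism_alg_hom (f : {lrmorphism A -> B}) : alg_hom f.
Proof. by split; [exact: linearP | exact: rmorphism_monoidP]. Qed.

Definition alg_hom_lrmorphism (f : A -> B) (hf : alg_hom f) : {lrmorphism A -> B} :=
  HB.pack f (GRing.isLinear.Build C A B *:%R f hf.1)
    (GRing.isMonoidMorphism.Build A B f hf.2).

End AlgHom.

Section RelationSums.
Variables (C : numClosedFieldType) (n : nat) (R : 'I_n -> 'I_n -> 'I_n -> 'I_n -> C).

Lemma linear_Rsum (A B : algType C) (f : {linear A -> B}) (c : C) i j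
    (u w : 'I_n -> A) :
  f (c *: \sum_(a < n) \sum_(b < n) R a i b j *: (u b * w a)) =
  c *: \sum_(a < n) \sum_(b < n) R a i b j *: f (u b * w a).
Proof.
rewrite linearZ linear_sum; congr (_ *: _); apply: eq_bigr => a _.
by rewrite linear_sum; apply: eq_bigr => b _; rewrite linearZ.
Qed.

Lemma lrmorph_Rsum (A B : algType C) (f : {lrmorphism A -> B}) (c : C) i j
    (u w : 'I_n -> A) :
  f (c *: \sum_(a < n) \sum_(b < n) R a i b j *: (u b * w a)) =
  c *: \sum_(a < n) \sum_(b < n) R a i b j *: (f (u b) * f (w a)).
Proof. by rewrite linear_Rsum; under eq_bigr do under eq_bigr do rewrite rmorphM. Qed.

Lemma omega_rel_lrmorph (q : C) (A B : algType C) (f : {lrmorphism A -> B})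
    (x dx : 'I_n -> A) :
  omega_rel R q x dx -> omega_rel R q (f \o x) (f \o dx).
Proof.
move=> rel i j; have [r1 r2 r3] := rel i j.
by split; rewrite /= -lrmorph_Rsum -?r1 -?r2 -?r3 rmorphM.
Qed.
Lemma omega_rel_inj (q : C) (A B : algType C) (f : {lrmorphism A -> B})
    (x dx : 'I_n -> A) :
  injective f -> omega_rel R q (f \o x) (f \o dx) -> omega_rel R q x dx.
Proof.
move=> f_inj rel i j; have [r1 r2 r3] := rel i j.
by split; apply: f_inj; rewrite rmorphM lrmorph_Rsum.
Qed.
End RelationSums.

Section Presentation.
Variables (C : numClosedFieldType) (n : nat) (q : C).
Variable R : 'I_n -> 'I_n -> 'I_n -> 'I_n -> C.
Variables (A : algType C) (x dx : 'I_n -> A).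
Hypothesis HO : is_Omega R q x dx.

Lemma Omega_lift (B : algType C) (y dy : 'I_n -> B) : omega_rel R q y dy ->
  exists f : {lrmorphism A -> B}, forall i, f (x i) = y i /\ f (dx i) = dy i.
Proof.
move=> rel_y; have [[f [hf fE]] _] := HO.2 B y dy rel_y.
by exists (alg_hom_lrmorphism hf).
Qed.

Lemma Omega_hom_eq (B : algType C) (f g : {lrmorphism A -> B}) :
  (forall i, f (x i) = g (x i) /\ f (dx i) = g (dx i)) -> f =1 g.
Proof.
have [_ uniq] := HO.2 B _ _ (omega_rel_lrmorph f HO.1).
exact: uniq (lrmorphism_alg_hom f) (lrmorphism_alg_hom g).
Qed.
End Presentation.

Section Induction.
Variables (C : numClosedFieldType) (A : algType C) (P : A -> Prop).
Hypotheses (P1 : P 1) (PD : forall u w, P u -> P w -> P (u + w))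
  (PZ : forall (c : C) u, P u -> P (c *: u)) (PM : forall u w, P u -> P w -> P (u * w)).

Let P0 : P 0. Proof. by rewrite -(scale0r 1); apply: PZ. Qed.

(* Classically P is decidable, so it carves out a subalgebra; as it contains the
   generators, the universal property forces it to be everything. *)
Let Pb : pred A := fun v => if excluded_middle_informative (P v) then true else false.

Let PbP v : reflect (P v) (Pb v).
Proof. by rewrite /Pb; case: excluded_middle_informative => h; constructor. Qed.

Let Pb_closed : GRing.subsemialg_closed Pb.
Proof.
split; first exact/PbP.
- by split=> [|u w /PbP Pu /PbP Pw]; apply/PbP; [|apply: PD].
- by move=> c u /PbP Pu; apply/PbP; apply: PZ.
- by move=> u w /PbP Pu /PbP Pw; apply/PbP; apply: PM.
Qed.

HB.instance Definition _ := GRing.isSubalgClosed.Build C A Pb Pb_closed.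
Let S := {v : A | Pb v}.
HB.instance Definition _ := [isSub of S for @sval A Pb].
HB.instance Definition _ := [Choice of S by <:].
HB.instance Definition _ := [SubChoice_isSubAlgebra of S by <:].

Let val_alg_hom : alg_hom (val : S -> A).
Proof. by split; [exact: linearP | exact: rmorphism_monoidP]. Qed.

Variables (n : nat) (q : C) (R : 'I_n -> 'I_n -> 'I_n -> 'I_n -> C) (x dx : 'I_n -> A).

Lemma Omega_ind : is_Omega R q x dx ->
  (forall i, P (x i)) -> (forall i, P (dx i)) -> forall v, P v.
Proof.
move=> HO Px Pdx v.
pose y i : S := exist _ (x i) (introT (PbP _) (Px i)).
pose dy i : S := exist _ (dx i) (introT (PbP _) (Pdx i)).
have rel_y : omega_rel R q y dy.
  exact: (omega_rel_inj (f := alg_hom_lrmorphism val_alg_hom) (x := y) (dx := dy)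
    val_inj HO.1).
have [f fE] := Omega_lift HO rel_y.
have valfK : alg_hom_lrmorphism val_alg_hom \o f =1 idfun.
  by apply: (Omega_hom_eq HO) => i /=; have [-> ->] := fE i.
rewrite -[v]valfK; exact/PbP/valP.
Qed.
End Induction.

(** * Twisted derivations *)

Section UpperTriangular.
Variables (K : pzRingType) (B : algType K).

(* (a, b, c) stands for the matrix [[a, b], [0, c]]. *)
Definition uptri := (B * B * B)%type.
HB.instance Definition _ := GRing.Lmodule.copy uptri (B * B * B)%type.

Definition uptri_mul (u v : uptri) : uptri :=
  (u.1.1 * v.1.1, u.1.2 * v.2 + u.1.1 * v.1.2, u.2 * v.2).
Definition uptri_one : uptri := (1, 0, 1).

Lemma uptri_mulA : associative uptri_mul.
Proof.
move=> [[a b] c] [[a' b'] c'] [[a'' b''] c'']; rewrite /uptri_mul /=.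
by congr (_, _, _); rewrite ?mulrA // !mulrDl !mulrDr !mulrA addrA.
Qed.
Lemma uptri_mul1 : left_id uptri_one uptri_mul.
Proof. by move=> [[a b] c]; rewrite /uptri_mul /= !mul1r mul0r add0r. Qed.
Lemma uptri_mulr1 : right_id uptri_one uptri_mul.
Proof. by move=> [[a b] c]; rewrite /uptri_mul /= !mulr1 mulr0 addr0. Qed.
Lemma uptri_mulDl : left_distributive uptri_mul +%R.
Proof.
move=> [[a b] c] [[a' b'] c'] [[a'' b''] c'']; rewrite /uptri_mul /=.
by congr (_, _, _); rewrite !mulrDl // addrACA.
Qed.
Lemma uptri_mulDr : right_distributive uptri_mul +%R.
Proof.
move=> [[a b] c] [[a' b'] c'] [[a'' b''] c'']; rewrite /uptri_mul /=.
by congr (_, _, _); rewrite !mulrDr // addrACA.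
Qed.
Lemma uptri_one_neq0 : uptri_one != 0.
Proof. by apply/eqP => /(congr1 snd) /eqP; rewrite oner_eq0. Qed.
HB.instance Definition _ := GRing.Zmodule_isNzRing.Build uptri
  uptri_mulA uptri_mul1 uptri_mulr1 uptri_mulDl uptri_mulDr uptri_one_neq0.

Lemma uptri_mulE (u v : uptri) : u * v = uptri_mul u v.
Proof. by []. Qed.

Lemma uptri_scaleE (k : K) (u : uptri) : k *: u = (k *: u.1.1, k *: u.1.2, k *: u.2).
Proof. by case: u => [[? ?] ?]. Qed.

Lemma uptri_scaleAl (k : K) (u v : uptri) : k *: (u * v) = (k *: u : uptri) * v.
Proof.
case: u v => [[a b] c] [[a' b'] c'].
by rewrite uptri_scaleE !uptri_mulE /= /uptri_mul /= scalerDr !scalerAl.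
Qed.
HB.instance Definition _ := GRing.Lmodule_isLalgebra.Build K uptri uptri_scaleAl.
Lemma uptri_scaleAr (k : K) (u v : uptri) : k *: (u * v) = u * (k *: v : uptri).
Proof.
case: u v => [[a b] c] [[a' b'] c'].
by rewrite uptri_scaleE !uptri_mulE /= /uptri_mul /= scalerDr !scalerAr.
Qed.
HB.instance Definition _ := GRing.Lalgebra_isAlgebra.Build K uptri uptri_scaleAr.

Lemma uptri_addE (u v : uptri) : u + v = (u.1.1 + v.1.1, u.1.2 + v.1.2, u.2 + v.2).
Proof. by case: u v => [[? ?] ?] [[? ?] ?]. Qed.

Definition uptri11 (u : uptri) : B := u.1.1.
Definition uptri12 (u : uptri) : B := u.1.2.
Definition uptri22 (u : uptri) : B := u.2.

Fact uptri11_is_linear : linear uptri11.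
Proof. by move=> k u v; rewrite /uptri11 uptri_addE uptri_scaleE. Qed.
Fact uptri11_is_monoid_morphism : monoid_morphism uptri11.
Proof. by []. Qed.
HB.instance Definition _ := GRing.isLinear.Build K uptri B *:%R uptri11 uptri11_is_linear.
HB.instance Definition _ :=
  GRing.isMonoidMorphism.Build uptri B uptri11 uptri11_is_monoid_morphism.

Fact uptri22_is_linear : linear uptri22.
Proof. by move=> k u v; rewrite /uptri22 uptri_addE uptri_scaleE. Qed.
Fact uptri22_is_monoid_morphism : monoid_morphism uptri22.
Proof. by []. Qed.
HB.instance Definition _ := GRing.isLinear.Build K uptri B *:%R uptri22 uptri22_is_linear.
HB.instance Definition _ :=
  GRing.isMonoidMorphism.Build uptri B uptri22 uptri22_is_monoid_morphism.

Fact uptri12_is_linear : linear uptri12.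
Proof. by move=> k u v; rewrite /uptri12 uptri_addE uptri_scaleE. Qed.
HB.instance Definition _ := GRing.isLinear.Build K uptri B *:%R uptri12 uptri12_is_linear.

Lemma uptri12M (u v : uptri) : uptri12 (u * v) = uptri12 u * uptri22 v + uptri11 u * uptri12 v.
Proof. by []. Qed.

Lemma uptri_eq (u v : uptri) :
  uptri11 u = uptri11 v -> uptri12 u = uptri12 v -> uptri22 u = uptri22 v -> u = v.
Proof.
by case: u v => [[? ?] ?] [[? ?] ?]; rewrite /uptri11 /uptri12 /uptri22 /= => -> -> ->.
Qed.
End UpperTriangular.

Arguments uptri11 {K B}.
Arguments uptri12 {K B}.
Arguments uptri22 {K B}.

Section Derivations.
Variables (C : numClosedFieldType) (n : nat) (q : C).
Variable R : 'I_n -> 'I_n -> 'I_n -> 'I_n -> C.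
Variables (A : algType C) (x dx : 'I_n -> A).
Hypothesis HO : is_Omega R q x dx.

Definition scales_gens (T : A -> A) (lam mu : C) : Prop :=
  forall i, T (x i) = lam *: x i /\ T (dx i) = mu *: dx i.

Section Twisted.
Variables (B : algType C) (Tl Tr : A -> B).

Definition twisted_prod (u w : A) (du dw : B) : B := du * Tr w + Tl u * dw.

Definition twisted_rels (gx gdx : 'I_n -> B) : Prop :=
  forall i j, [/\
    twisted_prod (x i) (x j) (gx i) (gx j) =
      q^-1 *: \sum_(a < n) \sum_(b < n) R a i b j *: twisted_prod (x b) (x a) (gx b) (gx a),
    twisted_prod (dx i) (x j) (gdx i) (gx j) =
      q *: \sum_(a < n) \sum_(b < n) R a i b j *: twisted_prod (x b) (dx a) (gx b) (gdx a) &
    twisted_prod (dx i) (dx j) (gdx i) (gdx j) =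
      - q *: \sum_(a < n) \sum_(b < n) R a i b j *: twisted_prod (dx b) (dx a) (gdx b) (gdx a)].
End Twisted.

Lemma Omega_twisted_derivation (B : algType C) (Tl Tr : {lrmorphism A -> B})
    (gx gdx : 'I_n -> B) :
  twisted_rels Tl Tr gx gdx ->
  exists D : {linear A -> B},
    (forall u w, D (u * w) = D u * Tr w + Tl u * D w) /\
    (forall i, D (x i) = gx i /\ D (dx i) = gdx i).
Proof.
move=> Dgen.
pose y i : uptri B := (Tl (x i), gx i, Tr (x i)).
pose dy i : uptri B := (Tl (dx i), gdx i, Tr (dx i)).
have rel_y : omega_rel R q y dy.
  move=> i j; have [l1 l2 l3] := omega_rel_lrmorph Tl HO.1 i j.
  have [r1 r2 r3] := omega_rel_lrmorph Tr HO.1 i j.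
  have [d1 d2 d3] := Dgen i j.
  by split; apply: uptri_eq;
    rewrite ?rmorphM ?uptri12M ?lrmorph_Rsum ?linear_Rsum /=.
have [phi phiE] := Omega_lift HO rel_y.
have phi11 : uptri11 \o phi =1 Tl.
  by apply: (Omega_hom_eq HO) => i /=; have [-> ->] := phiE i.
have phi22 : uptri22 \o phi =1 Tr.
  by apply: (Omega_hom_eq HO) => i /=; have [-> ->] := phiE i.
exists (uptri12 \o phi); split=> [u w | i] /=.
  by rewrite rmorphM uptri12M -[Tr w]phi22 -[Tl u]phi11.
by have [-> ->] := phiE i.
Qed.
End Derivations.

(** * The Hecke condition and the defining relations *)

Lemma scalerAlr (K : pzRingType) (A : algType K) (a b : K) (u w : A) :
  a *: u * (b *: w) = (a * b) *: (u * w).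
Proof. by rewrite -scalerAl -scalerAr scalerA. Qed.

Section RelationSumAlgebra.
Variables (C : numClosedFieldType) (n : nat) (R : 'I_n -> 'I_n -> 'I_n -> 'I_n -> C).
Variable V : lmodType C.

Lemma Rsum_scale (i j : 'I_n) (c k : C) (t : 'I_n -> 'I_n -> V) :
  c *: \sum_(a < n) \sum_(b < n) R a i b j *: (k *: t a b) =
  k *: (c *: \sum_(a < n) \sum_(b < n) R a i b j *: t a b).
Proof.
rewrite !scaler_sumr; apply: eq_bigr => a _; rewrite !scaler_sumr.
by apply: eq_bigr => b _; rewrite !scalerA; congr (_ *: _); ring.
Qed.

Lemma Rsum_add (i j : 'I_n) (t t' : 'I_n -> 'I_n -> V) :
  \sum_(a < n) \sum_(b < n) R a i b j *: (t a b + t' a b) =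
  \sum_(a < n) \sum_(b < n) R a i b j *: t a b +
  \sum_(a < n) \sum_(b < n) R a i b j *: t' a b.
Proof.
rewrite -big_split; apply: eq_bigr => a _; rewrite -big_split.
by apply: eq_bigr => b _; rewrite scalerDr.
Qed.
End RelationSumAlgebra.

Section IdentityMatrix.
Variables (C : numClosedFieldType) (T : finType).

Lemma sum_idml (F : T -> C) u : \sum_w idm C u w * F w = F u.
Proof.
rewrite (bigD1 u) //= /idm eqxx mul1r big1 ?addr0 // => w.
by rewrite eq_sym => /negbTE ->; rewrite mul0r.
Qed.

Lemma sum_idmr (F : T -> C) v : \sum_w F w * idm C w v = F v.
Proof.
rewrite (bigD1 v) //= /idm eqxx mulr1 big1 ?addr0 // => w.
by move/negbTE ->; rewrite mulr0.
Qed.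
End IdentityMatrix.

Section Hecke.
Variables (C : numClosedFieldType) (n : nat) (q : C).
Variable R : 'I_n -> 'I_n -> 'I_n -> 'I_n -> C.
Hypotheses (q_neq0 : q != 0) (hecke : Hecke R q).

Lemma PRmxE u w : PRmx R u w = R u.2 w.1 u.1 w.2.
Proof.
rewrite /PRmx /mmul (bigD1 (u.2, u.1)) //= /Pmx /= !eqxx mul1r big1 ?addr0 //.
move=> [z1 z2]; rewrite xpair_eqE negb_and /= => /orP[] /negbTE z_neq.
  by rewrite (eq_sym u.2) z_neq andbF mul0r.
by rewrite (eq_sym u.1) z_neq mul0r.
Qed.

Lemma PRmx_sqr u v :
  mmul (PRmx R) (PRmx R) u v = (q - q^-1) * PRmx R u v + idm C u v.
Proof.
have := hecke u v; rewrite /mmul.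
rewrite (eq_bigr (fun w => PRmx R u w * PRmx R w v + q^-1 * (PRmx R u w * idm C w v)
  - q * (idm C u w * PRmx R w v) - q * q^-1 * (idm C u w * idm C w v))); last first.
  by move=> w _; ring.
rewrite !sumrB big_split /= -!mulr_sumr !sum_idmr sum_idml mulfV // mul1r => PR2.
set S := \sum_w _ in PR2 *.
by rewrite -[S]subr0 -PR2; ring.
Qed.

Lemma Hecke_entry (c d i j : 'I_n) :
  \sum_(a < n) \sum_(b < n) R c b d a * R a i b j =
  (q - q^-1) * R c i d j + ((d == i) && (c == j))%:R.
Proof.
have := PRmx_sqr (d, c) (i, j); rewrite /mmul PRmxE /idm xpair_eqE /= => <-.
rewrite -(pair_bigA _ (fun a b => PRmx R (d, c) (a, b) * PRmx R (a, b) (i, j))) exchange_big /=.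
by apply: eq_bigr => a _; apply: eq_bigr => b _; rewrite !PRmxE.
Qed.

Lemma Hecke_Rsum (V : lmodType C) (Z : 'I_n -> 'I_n -> V) (i j : 'I_n) :
  \sum_(a < n) \sum_(b < n) R a i b j *: \sum_(c < n) \sum_(d < n) R c b d a *: Z d c =
  Z i j + (q - q^-1) *: \sum_(a < n) \sum_(b < n) R a i b j *: Z b a.
Proof.
transitivity (\sum_(c < n) \sum_(d < n)
    (\sum_(a < n) \sum_(b < n) R c b d a * R a i b j) *: Z d c).
  under eq_bigr => a _ do under eq_bigr => b _ do rewrite scaler_sumr.
  under eq_bigr => a _ do rewrite exchange_big /=.
  rewrite exchange_big /=; apply: eq_bigr => c _.
  under eq_bigr => a _ do under eq_bigr => b _ do rewrite scaler_sumr.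
  under eq_bigr => a _ do rewrite exchange_big /=.
  rewrite exchange_big /=; apply: eq_bigr => d _.
  rewrite scaler_suml; apply: eq_bigr => a _; rewrite scaler_suml.
  by apply: eq_bigr => b _; rewrite scalerA mulrC.
under eq_bigr => c _ do under eq_bigr => d _ do rewrite Hecke_entry scalerDl.
under eq_bigr => c _ do rewrite big_split /=.
rewrite big_split /= addrC; congr (_ + _).
  rewrite (bigD1 j) //= (bigD1 i) //= !eqxx scale1r big1 => [|d /negbTE ->]; last first.
    by rewrite scale0r.
  rewrite addr0 big1 ?addr0 // => c /negbTE c_neq.
  by apply: big1 => d _; rewrite c_neq andbF scale0r.
rewrite scaler_sumr; apply: eq_bigr => c _; rewrite scaler_sumr.
by apply: eq_bigr => d _; rewrite scalerA.
Qed.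
End Hecke.

Section RelationChecks.
Variables (C : numClosedFieldType) (n : nat) (q : C).
Variable R : 'I_n -> 'I_n -> 'I_n -> 'I_n -> C.
Variables (A : algType C) (x dx : 'I_n -> A).
Hypothesis rel : omega_rel R q x dx.

Let rel_xx i j := let: And3 r _ _ := rel i j in r.
Let rel_dxx i j := let: And3 _ r _ := rel i j in r.
Let rel_dxdx i j := let: And3 _ _ r := rel i j in r.

Lemma omega_rel_scale (lam mu : C) :
  omega_rel R q (fun i => lam *: x i) (fun i => mu *: dx i).
Proof.
move=> i j; have [r1 r2 r3] := rel i j.
split; rewrite scalerAlr; under eq_bigr do under eq_bigr do rewrite scalerAlr;
  by rewrite Rsum_scale -?r1 -?r2 -?r3 // mulrC.
Qed.

Lemma grading_rels (al be : C) :
  twisted_rels q R x dx idfun idfun (fun i => al *: x i) (fun i => be *: dx i).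
Proof.
move=> i j; have [r1 r2 r3] := rel i j; rewrite /twisted_prod /=.
split; rewrite -scalerAl -scalerAr -scalerDl;
  under eq_bigr do under eq_bigr do rewrite -scalerAl -scalerAr -scalerDl;
  by rewrite Rsum_scale -?r1 -?r2 -?r3 // addrC.
Qed.

Hypotheses (q_neq0 : q != 0) (hecke : Hecke R q).

Lemma Hecke_swap i j :
  \sum_(a < n) \sum_(b < n) R a i b j *: (dx b * x a) =
  q *: (x i * dx j + (q - q^-1) *: \sum_(a < n) \sum_(b < n) R a i b j *: (x b * dx a)).
Proof.
under eq_bigr do under eq_bigr do rewrite rel_dxx.
by rewrite -[LHS]scale1r Rsum_scale scale1r (Hecke_Rsum q_neq0 hecke).
Qed.

Lemma raising_rels (Tl Tr : A -> A) :
  scales_gens x dx Tl 1 (- q^-1) -> scales_gens x dx Tr 1 q^-1 ->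
  twisted_rels q R x dx Tl Tr (fun i => q^-1 *: dx i) (fun=> 0).
Proof.
move=> TlE TrE i j; rewrite /twisted_prod.
have Tl_x k : Tl (x k) = x k by rewrite (TlE k).1 scale1r.
have Tr_x k : Tr (x k) = x k by rewrite (TrE k).1 scale1r.
split; rewrite ?Tl_x ?Tr_x ?mul0r ?mulr0 ?add0r ?addr0;
  under eq_bigr do under eq_bigr do rewrite ?Tl_x ?Tr_x ?mul0r ?mulr0 ?add0r ?addr0.
- rewrite -scalerAl -scalerAr -scalerDr rel_dxx.
  under eq_bigr do under eq_bigr do rewrite -scalerAl -scalerAr -scalerDr.
  rewrite Rsum_scale Rsum_add Hecke_swap; congr (_ *: _).
  by rewrite scalerDr scalerA mulVf // scale1r -addrA -scalerDl subrK addrC.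
- rewrite (TlE i).2 scalerAlr rel_dxdx.
  under eq_bigr do under eq_bigr do rewrite (TrE _).2 scalerAlr.
  by rewrite Rsum_scale !scalerA; congr (_ *: _); field.
- under eq_bigr do under eq_bigr do rewrite scaler0.
  by rewrite !big1_eq scaler0.
Qed.

Lemma lowering_rels (Tl Tr : A -> A) :
  scales_gens x dx Tl q^-1 1 -> scales_gens x dx Tr q (- q ^+ 2) ->
  twisted_rels q R x dx Tl Tr (fun=> 0) (fun i => q *: x i).
Proof.
move=> TlE TrE i j; rewrite /twisted_prod.
have Tl_dx k : Tl (dx k) = dx k by rewrite (TlE k).2 scale1r.
split; rewrite ?Tl_dx ?mul0r ?mulr0 ?add0r ?addr0;
  under eq_bigr do under eq_bigr do rewrite ?Tl_dx ?mul0r ?mulr0 ?add0r ?addr0.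
- under eq_bigr do under eq_bigr do rewrite scaler0.
  by rewrite !big1_eq scaler0.
- rewrite (TrE j).1 scalerAlr rel_xx.
  under eq_bigr do under eq_bigr do rewrite (TlE _).1 scalerAlr.
  by rewrite Rsum_scale !scalerA; congr (_ *: _); field.
- rewrite (TrE j).2 scalerAlr -scalerAr rel_dxx.
  under eq_bigr do under eq_bigr do rewrite (TrE _).2 scalerAlr -scalerAr.
  rewrite Rsum_add scalerDr !Rsum_scale Hecke_swap.
  set P := x i * dx j; set S := \sum_(a < n) _.
  by rewrite !scalerDr !scalerA addrCA -scalerDl; congr (_ *: _ + _ *: _); field.
Qed.
End RelationChecks.

Section Constructions.
Variables (C : numClosedFieldType) (n : nat) (q : C).
Variable R : 'I_n -> 'I_n -> 'I_n -> 'I_n -> C.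
Variables (A : algType C) (x dx : 'I_n -> A).
Hypothesis HO : is_Omega R q x dx.

Lemma Omega_scaling_automorphism (lam mu : C) :
  exists T : {lrmorphism A -> A}, scales_gens x dx T lam mu.
Proof. by have [T TE] := Omega_lift HO (omega_rel_scale HO.1 lam mu); exists T. Qed.

Lemma Omega_grading_derivation (al be : C) : exists D : {linear A -> A},
  (forall u w, D (u * w) = D u * w + u * D w) /\ scales_gens x dx D al be.
Proof. by have [D DE] := Omega_twisted_derivation HO (grading_rels HO.1 al be); exists D. Qed.
End Constructions.

(** * Weight vectors *)

Section WeightCharacters.
Variables (C : numClosedFieldType) (q : C).
Hypothesis q_neq0 : q != 0.

Lemma sq_neq0 : sq q != 0.
Proof. by rewrite /sq sqrtC_eq0. Qed.

Let sqK : sq q ^+ 2 = q. Proof. exact: sqrtCK. Qed.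
Let expz2 (z : C) : z ^ 2 = z ^+ 2. Proof. by []. Qed.
Let expzN2 (z : C) : z ^ (-2) = (z ^+ 2)^-1. Proof. by []. Qed.
Let expz4 (z : C) : z ^ 4 = z ^+ 2 * z ^+ 2. Proof. by rewrite -exprD. Qed.
Let expz0 (z : C) : z ^ 0 = 1. Proof. by []. Qed.

Let weight_values := (expz2, expzN2, expz4, expz0, sqrCi, sqK, invrN1, mulN1r, mul1r, mulr1).

Lemma fa_morph k l k' l' : fa q (k + k') (l + l') = fa q k l * fa q k' l'.
Proof. by rewrite /fa opprD expfzDr // sq_neq0. Qed.
Lemma fb_morph k l k' l' : fb q (k + k') (l + l') = fb q k l * fb q k' l'.
Proof. by rewrite /fb opprD !expfzDr ?sq_neq0 ?neq0Ci //; ring. Qed.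
Lemma fc_morph k l k' l' : fc q (k + k') (l + l') = fc q k l * fc q k' l'.
Proof.
rewrite /fc (_ : _ + 2 * _ = k + 2 * l + (k' + 2 * l')); last by ring.
by rewrite !expfzDr ?sq_neq0 ?neq0Ci //; ring.
Qed.
Lemma fd_morph k l k' l' : fd q (k + k') (l + l') = fd q k l * fd q k' l'.
Proof. by rewrite /fd opprD expfzDr // sq_neq0. Qed.

Lemma fac k l : fa q k l * fc q k l = fK q k l.
Proof.
rewrite /fa /fc /fK (_ : k + 2 * l = k + l + l); last by ring.
rewrite !expfzDr ?sq_neq0 // -invr_expz.
by field; rewrite expfz_neq0 // sq_neq0.
Qed.
Lemma fbd k l : fb q k l * fd q k l = fKi q k l.
Proof. by rewrite /fb /fd /fKi; ring. Qed.

Lemma fa_values : (fa q 0 0 = 1) * (fa q 2 0 = 1) * (fa q 0 2 = q^-1) *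
  (fa q (- 2) 2 = q^-1) * (fa q 2 (- 2) = q).
Proof. by rewrite /fa !(oppr0, opprK) -invr_expz !weight_values. Qed.
Lemma fb_values : (fb q 0 0 = 1) * (fb q 2 0 = 1) * (fb q 0 2 = - q^-1) *
  (fb q (- 2) 2 = - q^-1) * (fb q 2 (- 2) = - q).
Proof. by rewrite /fb !(oppr0, opprK) -!invr_expz !weight_values. Qed.
Lemma fc_values : (fc q 0 0 = 1) * (fc q 2 0 = q) * (fc q 0 2 = - q ^+ 2) *
  (fc q (- 2) 2 = - q) * (fc q 2 (- 2) = - q^-1).
Proof.
rewrite /fc !(mulr0, addr0, add0r) (_ : - 2 + 2 * 2 = 2) // (_ : 2 + 2 * - 2 = - 2) //.
by rewrite -!invr_expz !weight_values.
Qed.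
Lemma fd_values : (fd q 0 0 = 1) * (fd q 2 0 = q^-1) * (fd q 0 2 = 1) *
  (fd q (- 2) 2 = q) * (fd q 2 (- 2) = q^-1).
Proof. by rewrite /fd !(oppr0, opprK) -invr_expz !weight_values. Qed.
Lemma fK_values : (fK q 0 0 = 1) * (fK q 2 0 = q) * (fK q 0 2 = - q).
Proof. by rewrite /fK !weight_values. Qed.
Lemma fKi_values : (fKi q 0 0 = 1) * (fKi q 2 0 = q^-1) * (fKi q 0 2 = - q^-1).
Proof. by rewrite /fKi !oppr0 -!invr_expz !weight_values. Qed.
End WeightCharacters.

Section EigenvectorSums.
Variables (K : fieldType) (V : lmodType K) (H : {linear V -> V}).
Variables (I : eqType) (ev : I -> K) (vec : I -> V).

Lemma eigenvector_sum_eq0 (m : K) (s : seq I) :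
  (forall p, p \in s -> H (vec p) = ev p *: vec p /\ ev p != m) ->
  H (\sum_(p <- s) vec p) = m *: \sum_(p <- s) vec p -> \sum_(p <- s) vec p = 0.
Proof.
elim: s vec => [|p0 s IHs] vc vcE; first by rewrite big_nil.
rewrite big_cons; set u := _ + _ => Hu.
have [Hp0 p0_neq] := vcE p0 (mem_head _ _).
have vcE' p : p \in s -> H (vc p) = ev p *: vc p /\ ev p != m.
  by move=> ps; apply: vcE; rewrite inE ps orbT.
pose vc' p := (ev p - ev p0) *: vc p.
have Hsum : H (\sum_(p <- s) vc p) = \sum_(p <- s) ev p *: vc p.
  by rewrite linear_sum big_seq [RHS]big_seq; apply: eq_bigr => p /vcE' [].
have sum_vc' : \sum_(p <- s) vc' p = (m - ev p0) *: u.
  rewrite /vc'; under eq_bigr do rewrite scalerBl.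
  rewrite sumrB -scaler_sumr -Hsum (_ : \sum_(p <- s) vc p = u - vc p0); last first.
    by rewrite /u addrC addKr.
  by rewrite linearB Hu Hp0 !scalerBl !scalerBr opprB addrA subrK.
have /eqP : \sum_(p <- s) vc' p = 0.
  apply: IHs => [p /vcE' [Hp p_neq] |].
    by split=> //; rewrite /vc' linearZZ Hp !scalerA mulrC.
  by rewrite sum_vc' linearZZ Hu !scalerA mulrC.
by rewrite sum_vc' scaler_eq0 subr_eq0 eq_sym (negbTE p0_neq) => /eqP.
Qed.

Lemma eigenvector_sum_filter (m : K) (s : seq I) :
  (forall p, p \in s -> H (vec p) = ev p *: vec p) ->
  H (\sum_(p <- s) vec p) = m *: \sum_(p <- s) vec p ->
  \sum_(p <- s) vec p = \sum_(p <- s | ev p == m) vec p.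
Proof.
move=> vecE Hsum; rewrite [LHS](bigID (fun p => ev p == m)) /=.
set t := \sum_(p <- s | ev p != m) vec p.
have tE : t = \sum_(p <- s) vec p - \sum_(p <- s | ev p == m) vec p.
  by rewrite [in RHS](bigID (fun p => ev p == m)) /= addrC addrK.
suff -> : t = 0 by rewrite addr0.
rewrite /t -big_filter; apply: (eigenvector_sum_eq0 (m := m)) => [p|].
  by rewrite mem_filter => /andP[p_neq ps]; split; [apply: vecE|].
rewrite big_filter -/t tE linearB Hsum scalerBr; congr (_ - _).
rewrite linear_sum scaler_sumr big_seq_cond [RHS]big_seq_cond.
by apply: eq_bigr => p /andP[/vecE -> /eqP ->].
Qed.
End EigenvectorSums.

Lemma twisted_derivation_1 (K : pzRingType) (A B : algType K)
    (D : {linear A -> B}) (Tl Tr : A -> B) :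
  Tl 1 = 1 -> Tr 1 = 1 ->
  (forall u w, D (u * w) = D u * Tr w + Tl u * D w) -> D 1 = 0.
Proof.
move=> Tl1 Tr1 DM; have := DM 1 1; rewrite mulr1 Tl1 Tr1 mulr1 mul1r => D1.
by apply: (addrI (D 1)); rewrite addr0 -D1.
Qed.

Lemma twisted_derivation_comp (K : pzRingType) (A : algType K)
    (D1 D2 : {linear A -> A}) (Tl1 Tr1 Tl2 Tr2 : A -> A) :
  (forall u w, D1 (u * w) = D1 u * Tr1 w + Tl1 u * D1 w) ->
  (forall u w, D2 (u * w) = D2 u * Tr2 w + Tl2 u * D2 w) ->
  forall u w, D2 (D1 (u * w)) =
    D2 (D1 u) * Tr2 (Tr1 w) + Tl2 (Tl1 u) * D2 (D1 w) +
    (Tl2 (D1 u) * D2 (Tr1 w) + D2 (Tl1 u) * Tr2 (D1 w)).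
Proof.
move=> D1M D2M u w.
by rewrite D1M linearD !D2M [_ + Tl2 (Tl1 u) * _]addrC addrACA.
Qed.

Lemma commutator_weight (K : pzRingType) (V : lmodType K) (X D : {linear V -> V})
    (v : V) (m d : int) :
  D v = m%:~R *: v -> D (X v) = (m + d)%:~R *: X v -> X (D v) - D (X v) = - (d%:~R *: X v).
Proof.
by move=> Dv DXv; rewrite Dv linearZZ DXv -scalerBl intrD opprD addNKr scaleNr.
Qed.

Section Covariance.
Variables (C : numClosedFieldType) (n : nat) (q : C).
Variable R : 'I_n -> 'I_n -> 'I_n -> 'I_n -> C.
Variables (A : algType C) (x dx : 'I_n -> A).
Hypotheses (HO : is_Omega R q x dx) (q_neq0 : q != 0) (q2_neq1 : q ^+ 2 != 1).
Variables (H1 H2 Xp Xm : {linear A -> A}) (Ta Tb Tc Td : {lrmorphism A -> A}).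
(* Ta, Tb, Tc, Td are the operators fa, fb, fc, fd of (H1, H2): they act on the
   generators, of weights (2, 0) and (0, 2), by the values of these functions. *)
Hypotheses (Ta_gens : scales_gens x dx Ta 1 q^-1) (Tb_gens : scales_gens x dx Tb 1 (- q^-1))
  (Tc_gens : scales_gens x dx Tc q (- q ^+ 2)) (Td_gens : scales_gens x dx Td q^-1 1).
Hypotheses (H1_gens : scales_gens x dx H1 2%:R 0) (H2_gens : scales_gens x dx H2 0 2%:R)
  (Xp_gens : forall i, Xp (x i) = q^-1 *: dx i /\ Xp (dx i) = 0)
  (Xm_gens : forall i, Xm (x i) = 0 /\ Xm (dx i) = q *: x i).
Hypotheses (H1M : forall u w, H1 (u * w) = H1 u * w + u * H1 w)
  (H2M : forall u w, H2 (u * w) = H2 u * w + u * H2 w)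
  (XpM : forall u w, Xp (u * w) = Xp u * Ta w + Tb u * Xp w)
  (XmM : forall u w, Xm (u * w) = Xm u * Tc w + Td u * Xm w).

Record homogeneous (v : A) (k l : int) : Prop := Homogeneous {
  homH1 : H1 v = k%:~R *: v;
  homH2 : H2 v = l%:~R *: v;
  homTa : Ta v = fa q k l *: v;
  homTb : Tb v = fb q k l *: v;
  homTc : Tc v = fc q k l *: v;
  homTd : Td v = fd q k l *: v }.

Lemma homogeneous0 k l : homogeneous 0 k l.
Proof. by split; rewrite linear0 scaler0. Qed.

Lemma homogeneousD u w k l :
  homogeneous u k l -> homogeneous w k l -> homogeneous (u + w) k l.
Proof.
case=> u1 u2 ua ub uc ud [w1 w2 wa wb wc wd].
by split; rewrite raddfD scalerDr; congr (_ + _).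
Qed.

Lemma homogeneousZ c u k l : homogeneous u k l -> homogeneous (c *: u) k l.
Proof.
case=> u1 u2 ua ub uc ud.
by split; rewrite linearZZ /= ?u1 ?u2 ?ua ?ub ?uc ?ud scalerA mulrC -scalerA.
Qed.

Lemma homogeneousM u w k l k' l' : homogeneous u k l -> homogeneous w k' l' ->
  homogeneous (u * w) (k + k') (l + l').
Proof.
case=> u1 u2 ua ub uc ud [w1 w2 wa wb wc wd]; split.
- by rewrite H1M u1 w1 -scalerAl -scalerAr -scalerDl intrD.
- by rewrite H2M u2 w2 -scalerAl -scalerAr -scalerDl intrD.
- by rewrite rmorphM /= ua wa scalerAlr fa_morph.
- by rewrite rmorphM /= ub wb scalerAlr fb_morph.
- by rewrite rmorphM /= uc wc scalerAlr fc_morph.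
- by rewrite rmorphM /= ud wd scalerAlr fd_morph.
Qed.

Lemma homTaTc v k l : homogeneous v k l -> Ta (Tc v) = fK q k l *: v.
Proof. by move=> hv; rewrite (homTc hv) linearZZ /= (homTa hv) scalerA mulrC fac. Qed.
Lemma homTcTa v k l : homogeneous v k l -> Tc (Ta v) = fK q k l *: v.
Proof. by move=> hv; rewrite (homTa hv) linearZZ /= (homTc hv) scalerA fac. Qed.
Lemma homTbTd v k l : homogeneous v k l -> Tb (Td v) = fKi q k l *: v.
Proof. by move=> hv; rewrite (homTd hv) linearZZ /= (homTb hv) scalerA mulrC fbd. Qed.
Lemma homTdTb v k l : homogeneous v k l -> Td (Tb v) = fKi q k l *: v.
Proof. by move=> hv; rewrite (homTb hv) linearZZ /= (homTd hv) scalerA fbd. Qed.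

Lemma H1_1 : H1 1 = 0.
Proof. exact: (twisted_derivation_1 (Tl := idfun) (Tr := idfun) erefl erefl H1M). Qed.
Lemma H2_1 : H2 1 = 0.
Proof. exact: (twisted_derivation_1 (Tl := idfun) (Tr := idfun) erefl erefl H2M). Qed.
Lemma Xp_1 : Xp 1 = 0.
Proof. exact: (twisted_derivation_1 (rmorph1 Tb) (rmorph1 Ta) XpM). Qed.
Lemma Xm_1 : Xm 1 = 0.
Proof. exact: (twisted_derivation_1 (rmorph1 Td) (rmorph1 Tc) XmM). Qed.

Lemma homogeneous1 : homogeneous 1 0 0.
Proof.
by split; rewrite ?H1_1 ?H2_1 ?rmorph1 ?fa_values ?fb_values ?fc_values ?fd_values
  ?scale1r ?scale0r.
Qed.

Lemma homogeneous_x i : homogeneous (x i) 2 0.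
Proof.
have [[H1x _] [H2x _]] := (H1_gens i, H2_gens i).
have [[Tax _] [Tbx _]] := (Ta_gens i, Tb_gens i).
have [[Tcx _] [Tdx _]] := (Tc_gens i, Td_gens i).
by split; rewrite ?H1x ?H2x ?Tax ?Tbx ?Tcx ?Tdx ?fa_values ?fb_values ?fc_values ?fd_values.
Qed.

Lemma homogeneous_dx i : homogeneous (dx i) 0 2.
Proof.
have [[_ H1dx] [_ H2dx]] := (H1_gens i, H2_gens i).
have [[_ Tadx] [_ Tbdx]] := (Ta_gens i, Tb_gens i).
have [[_ Tcdx] [_ Tddx]] := (Tc_gens i, Td_gens i).
by split; rewrite ?H1dx ?H2dx ?Tadx ?Tbdx ?Tcdx ?Tddx ?fa_values ?fb_values ?fc_values ?fd_values.
Qed.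

Record Uq_weight_vector (v : A) (k l : int) : Prop := UqWeightVector {
  Uq_hom : homogeneous v k l;
  Uq_homXp : homogeneous (Xp v) (k - 2) (l + 2);
  Uq_homXm : homogeneous (Xm v) (k + 2) (l - 2);
  Uq_XpXp : Xp (Xp v) = 0;
  Uq_XmXm : Xm (Xm v) = 0;
  Uq_comm : Xm (Xp v) - Xp (Xm v) = ((fK q k l - fKi q k l) / (q - q^-1)) *: v }.

Lemma q_sub_qV_neq0 : q - q^-1 != 0.
Proof. by apply: contra q2_neq1; rewrite subr_eq0 expr2 => /eqP {2}->; rewrite mulfV. Qed.

Lemma Uq1 : Uq_weight_vector 1 0 0.
Proof.
split; rewrite ?Xp_1 ?Xm_1 ?linear0 ?subr0 ?fK_values ?fKi_values ?subrr ?mul0r ?scale0r //.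
- exact: homogeneous1.
- exact: homogeneous0.
- exact: homogeneous0.
- by rewrite addr0.
Qed.

Lemma Uq_x i : Uq_weight_vector (x i) 2 0.
Proof.
have [[Xpx Xpdx] [Xmx Xmdx]] := (Xp_gens i, Xm_gens i).
split; rewrite ?Xpx ?Xmx.
- exact: homogeneous_x.
- exact/homogeneousZ/homogeneous_dx.
- exact: homogeneous0.
- by rewrite linearZZ /= Xpdx scaler0.
- exact: linear0.
- rewrite linear0 subr0 linearZZ /= Xmdx scalerA mulVf // fK_values fKi_values.
  by rewrite divff ?scale1r ?q_sub_qV_neq0.
Qed.

Lemma Uq_dx i : Uq_weight_vector (dx i) 0 2.
Proof.
have [[Xpx Xpdx] [Xmx Xmdx]] := (Xp_gens i, Xm_gens i).
split; rewrite ?Xpdx ?Xmdx.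
- exact: homogeneous_dx.
- exact: homogeneous0.
- exact/homogeneousZ/homogeneous_x.
- exact: linear0.
- by rewrite linearZZ /= Xmx scaler0.
- rewrite linear0 sub0r linearZZ /= Xpx scalerA mulfV // fK_values fKi_values.
  by rewrite scale1r -opprD mulNr divff ?scaleN1r ?q_sub_qV_neq0.
Qed.

Lemma UqZ c v k l : Uq_weight_vector v k l -> Uq_weight_vector (c *: v) k l.
Proof.
case=> hv hXp hXm XpXp XmXm comm; split.
- exact: homogeneousZ hv.
- rewrite linearZZ; exact: homogeneousZ hXp.
- rewrite linearZZ; exact: homogeneousZ hXm.
- by rewrite !linearZZ /= XpXp scaler0.
- by rewrite !linearZZ /= XmXm scaler0.
- rewrite [Xp (c *: v)]linearZZ [Xm (c *: v)]linearZZ /=.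
  rewrite [Xm (c *: _)]linearZZ [Xp (c *: _)]linearZZ /=.
  by rewrite -scalerBr comm !scalerA mulrC.
Qed.

Lemma XpM_hom u w k l k' l' : homogeneous u k l -> homogeneous w k' l' ->
  Xp (u * w) = fa q k' l' *: (Xp u * w) + fb q k l *: (u * Xp w).
Proof. by move=> hu hw; rewrite XpM (homTa hw) (homTb hu) -scalerAr -scalerAl. Qed.

Lemma XmM_hom u w k l k' l' : homogeneous u k l -> homogeneous w k' l' ->
  Xm (u * w) = fc q k' l' *: (Xm u * w) + fd q k l *: (u * Xm w).
Proof. by move=> hu hw; rewrite XmM (homTc hw) (homTd hu) -scalerAr -scalerAl. Qed.

Section Product.
Variables (u w : A) (k l k' l' : int).
Hypotheses (gu : Uq_weight_vector u k l) (gw : Uq_weight_vector w k' l').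

Let hu := Uq_hom gu.
Let hw := Uq_hom gw.

Lemma Uq_homXpM : homogeneous (Xp (u * w)) (k + k' - 2) (l + l' + 2).
Proof.
rewrite (XpM_hom hu hw); apply: homogeneousD; apply: homogeneousZ.
  by rewrite addrAC [l + l' + 2]addrAC; apply: homogeneousM (Uq_homXp gu) hw.
by rewrite -!addrA; apply: homogeneousM hu (Uq_homXp gw).
Qed.

Lemma Uq_homXmM : homogeneous (Xm (u * w)) (k + k' + 2) (l + l' - 2).
Proof.
rewrite (XmM_hom hu hw); apply: homogeneousD; apply: homogeneousZ.
  by rewrite addrAC [l + l' - 2]addrAC; apply: homogeneousM (Uq_homXm gu) hw.
by rewrite -!addrA; apply: homogeneousM hu (Uq_homXm gw).
Qed.

Lemma Uq_XpXpM : Xp (Xp (u * w)) = 0.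
Proof.
rewrite (twisted_derivation_comp XpM XpM) (Uq_XpXp gu) (Uq_XpXp gw) mul0r mulr0 !add0r.
rewrite (homTb (Uq_homXp gu)) (homTa hw) (homTb hu) (homTa (Uq_homXp gw)).
rewrite [Xp (_ *: w)]linearZZ [Xp (_ *: u)]linearZZ /=.
rewrite !scalerAlr -scalerDl (fb_morph q_neq0) (fa_morph q_neq0) fb_values fa_values.
by rewrite (_ : _ + _ = 0 :> C) ?scale0r //; ring.
Qed.

Lemma Uq_XmXmM : Xm (Xm (u * w)) = 0.
Proof.
rewrite (twisted_derivation_comp XmM XmM) (Uq_XmXm gu) (Uq_XmXm gw) mul0r mulr0 !add0r.
rewrite (homTd (Uq_homXm gu)) (homTc hw) (homTd hu) (homTc (Uq_homXm gw)).
rewrite [Xm (_ *: w)]linearZZ [Xm (_ *: u)]linearZZ /=.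
rewrite !scalerAlr -scalerDl (fd_morph q_neq0) (fc_morph q_neq0) fd_values fc_values.
by rewrite (_ : _ + _ = 0 :> C) ?scale0r //; ring.
Qed.

Lemma Uq_commM : Xm (Xp (u * w)) - Xp (Xm (u * w)) =
  ((fK q (k + k') (l + l') - fKi q (k + k') (l + l')) / (q - q^-1)) *: (u * w).
Proof.
rewrite (twisted_derivation_comp XpM XmM) (twisted_derivation_comp XmM XpM).
have cross1 : Td (Xp u) * Xm (Ta w) = Xp (Td u) * Ta (Xm w).
  rewrite (homTd (Uq_homXp gu)) (homTa hw) (homTd hu) (homTa (Uq_homXm gw)).
  rewrite [Xm (_ *: w)]linearZZ [Xp (_ *: u)]linearZZ /= !scalerAlr.
  by rewrite (fd_morph q_neq0) (fa_morph q_neq0) fd_values fa_values; congr (_ *: _); ring.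
have cross2 : Xm (Tb u) * Tc (Xp w) = Tb (Xm u) * Xp (Tc w).
  rewrite (homTb (Uq_homXm gu)) (homTc hw) (homTb hu) (homTc (Uq_homXp gw)).
  rewrite [Xp (_ *: w)]linearZZ [Xm (_ *: u)]linearZZ /= !scalerAlr.
  by rewrite (fb_morph q_neq0) (fc_morph q_neq0) fb_values fc_values; congr (_ *: _); ring.
rewrite cross1 cross2 [Xp (Td u) * _ + _]addrC [X in _ - X]addrC addrKA.
rewrite (homTcTa hw) (homTaTc hw) (homTdTb hu) (homTbTd hu) -!scalerAr -!scalerAl.
rewrite opprD addrACA -!scalerBr.
rewrite -mulrBl -mulrBr (Uq_comm gu) (Uq_comm gw) -scalerAl -scalerAr !scalerA -scalerDl.
congr (_ *: _); rewrite -!(fac q_neq0) -!(fbd q) (fa_morph q_neq0) (fc_morph q_neq0).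
by rewrite (fb_morph q_neq0) (fd_morph q_neq0); ring.
Qed.

Lemma UqM : Uq_weight_vector (u * w) (k + k') (l + l').
Proof.
split; [exact: homogeneousM hu hw | exact: Uq_homXpM | exact: Uq_homXmM |
        exact: Uq_XpXpM | exact: Uq_XmXmM | exact: Uq_commM].
Qed.
End Product.

Definition Uq_sum (v : A) : Prop := exists s : seq (A * (int * int)),
  v = \sum_(p <- s) p.1 /\ forall p, p \in s -> Uq_weight_vector p.1 p.2.1 p.2.2.

Lemma Uq_decomposition v : Uq_sum v.
Proof.
have single u k l : Uq_weight_vector u k l -> Uq_sum u.
  by move=> gu; exists [:: (u, (k, l))]; rewrite big_seq1; split=> // p /[!inE] /eqP ->.
apply: (Omega_ind (P := Uq_sum) _ _ _ _ HO) => [| u w | c u | u w | i | i].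
- exact/single/Uq1.
- move=> [s1 [-> gs1]] [s2 [-> gs2]]; exists (s1 ++ s2); rewrite big_cat.
  by split=> // p; rewrite mem_cat => /orP[/gs1 | /gs2].
- move=> [s1 [-> gs1]]; exists [seq (c *: p.1, p.2) | p <- s1].
  rewrite big_map scaler_sumr; split=> // _ /mapP[p /gs1 gp ->]; exact: UqZ.
- move=> [s1 [-> gs1]] [s2 [-> gs2]].
  exists [seq (p.1 * r.1, (p.2.1 + r.2.1, p.2.2 + r.2.2)) | p <- s1, r <- s2].
  rewrite big_allpairs_dep mulr_suml; split.
    by apply: eq_bigr => p _; rewrite mulr_sumr.
  by move=> _ /allpairsP[[p r] [/= /gs1 gp /gs2 gr ->]]; apply: UqM.
- exact/single/Uq_x.
- exact/single/Uq_dx.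
Qed.

Lemma funop_of_Uq (T : {linear A -> A}) (f : int -> int -> C) :
  (forall v k l, Uq_weight_vector v k l -> T v = f k l *: v) -> funop H1 H2 f T.
Proof.
move=> TE; split=> [|v m1 m2 [H1v H2v]]; first exact: linearP.
have [s [vE gs]] := Uq_decomposition v; rewrite vE in H1v H2v *.
have E1 : \sum_(p <- s) p.1 = \sum_(p <- [seq p <- s | p.2.1%:~R == m1%:~R :> C]) p.1.
  rewrite big_filter; apply: (eigenvector_sum_filter (H := H1)) H1v.
  by move=> p /gs/Uq_hom/homH1.
rewrite E1 in H2v *; set s1 := filter _ s in H2v *.
have gs1 p : p \in s1 -> Uq_weight_vector p.1 p.2.1 p.2.2 /\ p.2.1 = m1.
  by rewrite /s1 mem_filter eqr_int => /andP[/eqP e /gs gp].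
rewrite (eigenvector_sum_filter (H := H2) (ev := fun p => p.2.2%:~R) _ H2v); last first.
  by move=> p /gs1[/Uq_hom/homH2].
rewrite linear_sum scaler_sumr big_seq_cond [RHS]big_seq_cond.
apply: eq_bigr => p /andP[/gs1[gp <-] /eqP /intr_inj <-]; exact: TE gp.
Qed.

Lemma eq_on_Uq (F G : {linear A -> A}) :
  (forall v k l, Uq_weight_vector v k l -> F v = G v) -> F =1 G.
Proof.
move=> FG v; have [s [-> gs]] := Uq_decomposition v.
by rewrite !linear_sum big_seq [RHS]big_seq; apply: eq_bigr => p /gs /FG.
Qed.

Lemma covariance : covariant_right_action q x dx H1 H2 Xp Xm.
Proof.
split; first by do !split; exact: linearP.
  move=> v; have [s [vE gs]] := Uq_decomposition v.
  by exists s; split=> // p /gs /Uq_hom [].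
(* K1 K2 and its inverse act on weights by fa fc = fK and fb fd = fKi. *)
exists Ta, Tb, Tc, Td, (Ta \o Tc), (Tb \o Td); split.
- split; [|split; [|split; [|split; [|split]]]];
    apply: funop_of_Uq => v k l /Uq_hom hv /=.
  + exact: homTa hv.
  + exact: homTb hv.
  + exact: homTc hv.
  + exact: homTd hv.
  + exact: homTaTc hv.
  + exact: homTbTd hv.
- move=> v; do !split.
  + apply: (eq_on_Uq (F := H2 \o H1) (G := H1 \o H2)) => {}v k l /Uq_hom hv /=.
    by rewrite (homH1 hv) (homH2 hv) !linearZZ /= (homH1 hv) (homH2 hv) !scalerA mulrC.
  + apply: (eq_on_Uq (F := (Xp \o H1) \- (H1 \o Xp)) (G := 2%:R \*: Xp)) => {}v k l gv /=.
    by rewrite (commutator_weight (homH1 (Uq_hom gv)) (homH1 (Uq_homXp gv))) intrN scaleNr opprK.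
  + rewrite -scaleNr.
    apply: (eq_on_Uq (F := (Xm \o H1) \- (H1 \o Xm)) (G := (- 2%:R) \*: Xm)) => {}v k l gv /=.
    by rewrite (commutator_weight (homH1 (Uq_hom gv)) (homH1 (Uq_homXm gv))) scaleNr.
  + rewrite -scaleNr.
    apply: (eq_on_Uq (F := (Xp \o H2) \- (H2 \o Xp)) (G := (- 2%:R) \*: Xp)) => {}v k l gv /=.
    by rewrite (commutator_weight (homH2 (Uq_hom gv)) (homH2 (Uq_homXp gv))) scaleNr.
  + apply: (eq_on_Uq (F := (Xm \o H2) \- (H2 \o Xm)) (G := 2%:R \*: Xm)) => {}v k l gv /=.
    by rewrite (commutator_weight (homH2 (Uq_hom gv)) (homH2 (Uq_homXm gv))) intrN scaleNr opprK.
  + apply: (eq_on_Uq (F := (Xm \o Xp) \- (Xp \o Xm))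
      (G := (q - q^-1)^-1 \*: ((Ta \o Tc) \- (Tb \o Td)))) => {}v k l gv /=.
    by rewrite (Uq_comm gv) (homTaTc (Uq_hom gv)) (homTbTd (Uq_hom gv)) -scalerBl scalerA mulrC.
  + by apply: (eq_on_Uq (F := Xp \o Xp) (G := \0)) => {}v k l /Uq_XpXp.
  + by apply: (eq_on_Uq (F := Xm \o Xm) (G := \0)) => {}v k l /Uq_XmXm.
- done.
- move=> i; have [[H1x H1dx] [H2x H2dx]] := (H1_gens i, H2_gens i).
  have [[Xpx Xpdx] [Xmx Xmdx]] := (Xp_gens i, Xm_gens i).
  by rewrite H1x H1dx H2x H2dx !scale0r.
Qed.

End Covariance.

Unset Implicit Arguments.
Theorem mainTheorem8 (C : numClosedFieldType) (n : nat) (q : C)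
    (R : 'I_n -> 'I_n -> 'I_n -> 'I_n -> C) :
  q != 0 -> q ^+ 2 != 1 -> QYBE R -> Hecke R q ->
  forall (A : algType C) (x dx : 'I_n -> A), is_Omega R q x dx ->
  exists H1 H2 Xp Xm : A -> A, covariant_right_action q x dx H1 H2 Xp Xm.
Proof.
move=> q_neq0 q2_neq1 _ hecke A x dx HO.
have [Ta Ta_gens] := Omega_scaling_automorphism HO 1 q^-1.
have [Tb Tb_gens] := Omega_scaling_automorphism HO 1 (- q^-1).
have [Tc Tc_gens] := Omega_scaling_automorphism HO q (- q ^+ 2).
have [Td Td_gens] := Omega_scaling_automorphism HO q^-1 1.
have [H1 [H1M H1_gens]] := Omega_grading_derivation HO 2%:R 0.
have [H2 [H2M H2_gens]] := Omega_grading_derivation HO 0 2%:R.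
have [Xp [XpM Xp_gens]] :=
  Omega_twisted_derivation HO (raising_rels HO.1 q_neq0 hecke Tb_gens Ta_gens).
have [Xm [XmM Xm_gens]] :=
  Omega_twisted_derivation HO (lowering_rels HO.1 q_neq0 hecke Td_gens Tc_gens).
exists H1, H2, Xp, Xm.
exact: (covariance HO q_neq0 q2_neq1 Ta_gens Tb_gens Tc_gens Td_gens H1_gens H2_gens
  Xp_gens Xm_gens H1M H2M XpM XmM).
Qed.
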